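(* Let $(M,\varepsilon)$ be a local Lie group. Regarding the torsion $T$ as a section of $\Lambda^2(T^*M)\otimes TM$, one has $\widehat dT=0$.
   Context: $M$ is a smooth manifold of dimension $n\ge2$. A splitting $\varepsilon$ assigns to each $(p,q)\in M\times M$ a linear isomorphism $\varepsilon(p,q):T_pM\to T_qM$, smooth in $(p,q)$, with $\varepsilon(q,r)\circ\varepsilon(p,q)=\varepsilon(p,r)$, $\varepsilon(p,p)=\mathrm{id}$. In coordinates $\varepsilon(p,q)=(\varepsilon^i_j(x,y))$; set $\Gamma^i_{kj}(x)=[\partial\varepsilon^i_j(x,y)/\partial y^k]_{y=x}$ (summation convention). The torsion is $T^i_{jk}=\Gamma^i_{jk}-\Gamma^i_{kj}$. $(M,\varepsilon)$ is a local Lie group if the system $\partial f^i(x)/\partial x^j=\varepsilon^i_j(x,f(x))$ is completely integrable (for all $p,q$ there is a local diffeomorphism $f$ near $p$ with $f(p)=q$ and $df_x=\varepsilon(x,f(x))$); equivalently $\widehat{\mathfrak{R}}=0$, with $\widehat{\mathfrak{R}}^i_{rj,k}=\partial_r\Gamma^i_{kj}+\Gamma^a_{kr}\Gamma^i_{aj}-\partial_j\Gamma^i_{kr}-\Gamma^a_{kj}\Gamma^i_{ar}$. For a $TM$-valued $2$-form $\phi=(\phi^i_{kj})$, $(\widehat d\phi)^i_{rkj}=\widehat d_r\phi^i_{kj}-\widehat d_k\phi^i_{rj}-\widehat d_j\phi^i_{kr}$, where $\widehat d_r\phi^i_{kj}=\partial_r\phi^i_{kj}-\Gamma^i_{ar}\phi^a_{kj}$.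 *)

From HB Require Import structures.
From mathcomp Require Import all_boot all_order all_algebra.
From mathcomp Require Import all_classical all_reals all_analysis.
Set Implicit Arguments. Unset Strict Implicit. Unset Printing Implicit Defensive.
Import Order.TTheory GRing.Theory Num.Theory.
Import numFieldNormedType.Exports.
Local Open Scope classical_set_scope.
Local Open Scope ring_scope.

Section Defs.
Variables (R : realType) (n : nat).
Local Notation pt := 'rV[R]_n.

Definition ei (k : 'I_n) : pt := delta_mx 0 k.

Definition pd (k : 'I_n) (f : pt -> R) (x : pt) : R := derive f x (ei k).

Definition iter_pd (l : seq 'I_n) (f : pt -> R) : pt -> R :=
  foldr (fun k g => pd k g) f l.

Definition smooth_on (m : nat) (A : set 'rV[R]_m) (f : 'rV[R]_m -> R) :=
  forall (l : seq 'I_m) (x : 'rV[R]_m), A x ->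
    {for x, continuous (foldr (fun k g => fun y => derive g y (delta_mx 0 k)) f l)} /\
    forall k : 'I_m, derivable (foldr (fun k g => fun y => derive g y (delta_mx 0 k)) f l) x (delta_mx 0 k).

(* A splitting on the open coordinate domain U of R^n: eps x y is the matrix
   (eps^i_j(x,y)) of the isomorphism T_x -> T_y (acting on column vectors). *)
Definition splitting (U : set pt) (eps : pt -> pt -> 'M[R]_n) :=
  [/\ (forall i j : 'I_n,
         smooth_on [set z : 'rV[R]_(n + n) | U (lsubmx z) /\ U (rsubmx z)]
           (fun z => eps (lsubmx z) (rsubmx z) i j)),
      (forall x y, U x -> U y -> eps x y \in unitmx),
      (forall x y z, U x -> U y -> U z -> eps y z *m eps x y = eps x z) &
      (forall x, U x -> eps x x = 1%:M)].

(* Gam eps i k j x = Gamma^i_{kj}(x) = d eps^i_j(x,y)/dy^k at y = x *)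
Definition Gam (eps : pt -> pt -> 'M[R]_n) (i k j : 'I_n) (x : pt) : R :=
  pd k (fun y => eps x y i j) x.

Definition Tor (eps : pt -> pt -> 'M[R]_n) (i j k : 'I_n) (x : pt) : R :=
  Gam eps i j k x - Gam eps i k j x.

(* local Lie group: the system df^i/dx^j = eps^i_j(x, f(x)) is completely
   integrable: for all p q there is a local diffeomorphism f near p with
   f p = q and df_x = eps(x, f x). *)
Definition local_lie_group (U : set pt) (eps : pt -> pt -> 'M[R]_n) :=
  forall p q, U p -> U q ->
    exists (V : set pt) (f : pt -> pt),
      [/\ open V, V p, V `<=` U & f p = q] /\
      [/\ {in V &, injective f},
          open (f @` V),
          (forall x, V x -> U (f x) /\ differentiable f x) &
          (forall x, V x -> forall i j : 'I_n,
              pd j (fun z => f z ord0 i) x = eps x (f x) i j)].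

(* hat-d of a TM-valued 2-form phi (phi i k j x = phi^i_{kj}(x)):
   dhat_r phi^i_{kj} = d_r phi^i_{kj} - Gamma^i_{ar} phi^a_{kj} *)
Definition dhat_r (eps : pt -> pt -> 'M[R]_n)
  (phi : 'I_n -> 'I_n -> 'I_n -> pt -> R) (r i k j : 'I_n) (x : pt) : R :=
  pd r (phi i k j) x - \sum_(a < n) Gam eps i a r x * phi a k j x.

Definition dhat (eps : pt -> pt -> 'M[R]_n)
  (phi : 'I_n -> 'I_n -> 'I_n -> pt -> R) (i r k j : 'I_n) (x : pt) : R :=
  dhat_r eps phi r i k j x - dhat_r eps phi k i r j x - dhat_r eps phi j i k r x.

End Defs.

From HB Require Import structures.
From mathcomp Require Import all_boot all_order all_algebra.
From mathcomp Require Import all_classical all_reals all_analysis.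
From mathcomp Require Import ring lra.
Set Implicit Arguments. Unset Strict Implicit. Unset Printing Implicit Defensive.
Import Order.TTheory GRing.Theory Num.Theory.
Import numFieldNormedType.Exports.
Local Open Scope classical_set_scope.
Local Open Scope ring_scope.

(* The cocycle identity eps(y,w) = eps(x,w) eps(y,x) gives
   Gamma^i_{kj}(y) = d_k eps^i_a(x,.)(y) eps^a_j(y,x), whence
   d_r Gamma^i_{kj}(x) = d_r d_k eps^i_j(x,.)(x) - Gamma^i_{ka} Gamma^a_{rj}.
   If f solves df_w = eps(w, f w) near x with f x = z, the same identity writes
   d_j f^i as a function whose derivative at x is an explicit expression
   [lie_hessian x i r j z]; by Young's theorem it is symmetric in r and j.
   Differentiating this symmetry in z at z = x, and using the symmetry of the
   second derivatives of eps, gives \widehat{\mathfrak R} = 0.  Finally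
   \widehat d T is identically the cyclic sum of \widehat{\mathfrak R}, an
   algebraic Bianchi identity. *)

Lemma sum_delta_l (T : pzSemiRingType) (p : nat) (i : 'I_p) (X : 'I_p -> T) :
  \sum_a (i == a)%:R * X a = X i.
Proof.
rewrite (bigD1 i) //= eqxx mul1r big1 ?addr0 // => a ai.
by rewrite eq_sym (negbTE ai) mul0r.
Qed.

Lemma sum_delta_r (T : pzSemiRingType) (p : nat) (j : 'I_p) (X : 'I_p -> T) :
  \sum_a (a == j)%:R * X a = X j.
Proof. by rewrite -(sum_delta_l j); apply: eq_bigr => a _; rewrite eq_sym. Qed.

Lemma sumr_mulBr (T : pzRingType) (p : nat) (c d e : 'I_p -> T) :
  \sum_a c a * (d a - e a) = \sum_a c a * d a - \sum_a c a * e a.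
Proof. by rewrite -sumrB; apply: eq_bigr => a _; rewrite mulrBr. Qed.

Lemma near_open (T : topologicalType) (A : set T) (x : T) :
  open A -> A x -> \forall y \near x, A y.
Proof. by move=> oA Ax; apply: open_nbhs_nbhs. Qed.

Section RowAnalysis.
Variables (R : realType) (m : nat).
Implicit Types (g : 'rV[R]_m -> R) (x y z u v w : 'rV[R]_m) (c : 'I_m -> R) (k j : 'I_m).

Lemma row_entry_le_norm v k : `|v 0 k| <= `|v|.
Proof. by rewrite [X in _ <= X]mx_normrE; apply: le_trans (le_bigmax _ _ (0, k)). Qed.

Lemma row_norm_le v (e : R) : 0 <= e -> (forall k, `|v 0 k| <= e) -> `|v| <= e.
Proof.
move=> e0 ve; rewrite [X in X <= _]mx_normrE; apply: bigmax_le => // [[i k]] _ /=.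
by rewrite (ord1 i).
Qed.

Lemma eiE k j : ei R k 0 j = (k == j)%:R.
Proof. by rewrite /ei mxE eqxx eq_sym. Qed.

Lemma norm_ei k : `|ei R k| = 1.
Proof.
apply/le_anti/andP; split.
  by apply: row_norm_le => // j; rewrite eiE; case: (k == j); rewrite ?normr1 ?normr0.
by apply: le_trans (row_entry_le_norm _ k); rewrite eiE eqxx normr1.
Qed.

Section Restriction.
Variables (g : 'rV[R]_m -> R) (y v : 'rV[R]_m).

Let line_quotient (t : R) :
  (fun h : R => h^-1 *: (((fun s : R => g (y + s *: v)) \o shift t) (h *: 1) - g (y + t *: v)))
  = (fun h : R => h^-1 *: ((g \o shift (y + t *: v)) (h *: v) - g (y + t *: v))).
Proof.
apply: funext => h /=; congr (_ *: (g _ - _)).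
by rewrite [h *: 1]mulr1 scalerDl addrA [_ + h *: v]addrC addrA.
Qed.

Lemma derivable_line t :
  derivable g (y + t *: v) v -> derivable (fun s : R => g (y + s *: v)) t 1.
Proof. by rewrite /derivable line_quotient. Qed.

Lemma is_derive_line t : derivable g (y + t *: v) v ->
  is_derive t 1 (fun s : R => g (y + s *: v)) (derive g (y + t *: v) v).
Proof. by move=> d; split; [exact: derivable_line | rewrite /derive line_quotient]. Qed.

Let shift_quotient z :
  (fun h : R => h^-1 *: (((fun z => g (z + y)) \o shift z) (h *: v) - g (z + y)))
  = (fun h : R => h^-1 *: ((g \o shift (z + y)) (h *: v) - g (z + y))).
Proof. by apply: funext => h /=; rewrite addrA. Qed.

Lemma derivable_translate z :
  derivable g (z + y) v -> derivable (fun z => g (z + y)) z v.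
Proof. by rewrite /derivable shift_quotient. Qed.

Lemma derive_translate z : derive (fun z => g (z + y)) z v = derive g (z + y) v.
Proof. by rewrite /derive shift_quotient. Qed.

End Restriction.

Lemma MVT_line g y v (h : R) :
  (forall t, `|t| <= `|h| -> derivable g (y + t *: v) v) ->
  exists t, `|t| <= `|h| /\ g (y + h *: v) - g y = h * derive g (y + t *: v) v.
Proof.
move=> dg; pose phi s := g (y + s *: v); pose dphi s := derive g (y + s *: v) v.
have in_range a b t : `|a| <= `|h| -> `|b| <= `|h| -> a <= t <= b -> `|t| <= `|h|.
  rewrite !ler_norml => /andP[ha _] /andP[_ hb] /andP[hat htb].
  by rewrite (le_trans ha hat) (le_trans htb hb).
have mvt a b : a <= b -> `|a| <= `|h| -> `|b| <= `|h| ->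
    exists2 c, c \in `[a, b] & phi b - phi a = dphi c * (b - a).
  move=> ab ah bh; apply: MVT_segment => //.
    move=> t; rewrite in_itv /= => /andP[hat htb]; apply/is_derive_line/dg.
    by apply: (in_range a b) => //; rewrite !ltW.
  apply: derivable_within_continuous => t; rewrite in_itv /= => abt.
  exact/derivable_line/dg/(in_range a b).
have phi0 : phi 0 = g y by rewrite /phi scale0r addr0.
have hh : `|h| <= `|h| := lexx _.
have h0 : `|0 : R| <= `|h| by rewrite normr0.
have [hge0|hlt0] := leP 0 h.
  have [c] := mvt 0 h hge0 h0 hh; rewrite in_itv /= => ch E.
  exists c; split; first exact: (in_range 0 h).
  by rewrite -phi0 -/(phi h) E subr0 mulrC.
have [c] := mvt h 0 (ltW hlt0) hh h0; rewrite in_itv /= => ch E.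
exists c; split; first exact: (in_range h 0).
by rewrite -phi0 -/(phi h) -[LHS]opprB E /dphi; ring.
Qed.

Lemma open_norm_ball (A : set 'rV[R]_m) x :
  open A -> A x -> exists2 rho : R, 0 < rho & forall z, `|z - x| < rho -> A z.
Proof.
move=> oA /(near_open oA) /nbhs_ballP [rho /= rho0 H]; exists rho => // z zx.
by apply: H; rewrite -ball_normE /= distrC.
Qed.

Definition lin_form c v : R := \sum_k v 0 k * c k.

Lemma lin_form_is_linear c : linear (lin_form c).
Proof.
move=> a u v; rewrite /lin_form -[RHS]/(a * _ + _) mulr_sumr -big_split /=.
by apply: eq_bigr => k _; rewrite !mxE mulrDl mulrA.
Qed.

HB.instance Definition _ c :=
  GRing.isLinear.Build R 'rV[R]_m R *:%R (lin_form c) (lin_form_is_linear c).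

Lemma lin_form_continuous c : continuous (lin_form c).
Proof.
move=> x; apply/(@cvgrPdist_lt _ _ _ _ (nbhs_filter x)) => e e0.
pose C := \sum_k `|c k| + 1.
have C0 : 0 < C by rewrite ltr_wpDl // sumr_ge0.
apply/nbhs_ballP; exists (e / C); first by rewrite /= divr_gt0.
move=> z; rewrite -ball_normE /= => xz.
have lip : `|lin_form c x - lin_form c z| <= C * `|x - z|.
  rewrite /lin_form -sumrB; apply: le_trans (ler_norm_sum _ _ _) _.
  apply: (@le_trans _ _ (\sum_k `|c k| * `|x - z|)); last first.
    by rewrite -mulr_suml ler_wpM2r // lerDl.
  apply: ler_sum => k _; rewrite -mulrBl normrM mulrC ler_wpM2l //.
  by have := row_entry_le_norm (x - z) k; rewrite !mxE.
by apply: le_lt_trans lip _; rewrite mulrC -ltr_pdivlMr.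
Qed.

Lemma lin_form_scale_ei c (t : R) k : lin_form c (t *: ei R k) = t * c k.
Proof.
rewrite /lin_form (bigD1 k) //= big1 => [|j jk]; first by rewrite addr0 mxE eiE eqxx mulr1.
by rewrite mxE eiE eq_sym (negbTE jk) mulr0 mul0r.
Qed.

Definition has_grad g y c := forall e : R, 0 < e -> exists2 d : R, 0 < d &
  forall v, `|v| < d -> `|g (y + v) - g y - lin_form c v| <= e * `|v|.

Lemma has_grad_differentiable g y c : has_grad g y c -> differentiable g y.
Proof.
move=> gc.
have small e : 0 < e ->
    \forall h \near (0 : 'rV[R]_m), `|g (h + y) - (g y + lin_form c h)| <= e * `|h|.
  move=> e0; have [d d0 Hd] := gc e e0.
  apply/nbhs_ballP; exists d => // h; rewrite -ball_normE /= sub0r normrN => hd.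
  by rewrite [h + y]addrC opprD addrA; exact: Hd.
have dg : 'd g y = lin_form c :> (_ -> _).
  apply: (diff_unique (@lin_form_continuous c)).
  by apply/eqaddoP => e e0; exact: small.
apply/diff_locallyP; rewrite dg; split; first exact: lin_form_continuous.
by apply/eqaddoP => e e0; exact: small.
Qed.

Lemma diff_lin_form g y v :
  differentiable g y -> 'd g y v = lin_form (fun k => derive g y (ei R k)) v.
Proof.
move=> dg; rewrite {1}(row_sum_delta v) linear_sum; apply: eq_bigr => k _.
by rewrite linearZ deriveE.
Qed.

Lemma differentiable_has_grad g y :
  differentiable g y -> has_grad g y (fun k => derive g y (ei R k)).
Proof.
move=> dg e e0; have := diff_locally dg => /eqaddoP /(_ e e0) small.
have [d d0 Hd] := (nbhs_ballP _ _).1 small.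
exists d => // v vd; have := Hd v; rewrite -ball_normE /= sub0r normrN => /(_ vd).
rewrite !fctE /= [v + y]addrC opprD addrA.
by rewrite diff_lin_form.
Qed.

Lemma has_grad_near_eq g1 g2 y c :
  (\forall z \near y, g1 z = g2 z) -> has_grad g1 y c -> has_grad g2 y c.
Proof.
move=> /nbhs_ballP [r /= r0 g12] gc e e0; have [d d0 Hd] := gc e e0.
exists (Num.min d r); first by rewrite lt_min d0 r0.
move=> v; rewrite lt_min => /andP[vd vr].
have -> : g2 (y + v) = g1 (y + v).
  by apply/esym/g12; rewrite -ball_normE /= opprD addrA subrr sub0r normrN.
by rewrite -(g12 y (ballxx _ r0)); exact: Hd.
Qed.

Definition coord_path y v (k : nat) := y + \row_j (if (j < k)%N then v 0 j else 0).

Lemma coord_path0 y v : coord_path y v 0 = y.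
Proof. by apply/rowP => j; rewrite /coord_path !mxE addr0. Qed.

Lemma coord_path_end y v : coord_path y v m = y + v.
Proof. by apply/rowP => j; rewrite /coord_path !mxE ltn_ord. Qed.

Lemma coord_pathS y v k : coord_path y v k.+1 = coord_path y v k + v 0 k *: ei R k.
Proof.
apply/rowP => j; rewrite /coord_path !mxE eqxx /= -addrA; congr (_ + _).
rewrite ltnS leq_eqVlt; case: (eqVneq j k) => [->|jk] /=.
  by rewrite ltnn eqxx mulr1 add0r.
by rewrite (inj_eq val_inj) (negbTE jk) mulr0 addr0.
Qed.

Lemma coord_path_near y v k (t : R) :
  `|t| <= `|v 0 k| -> `|coord_path y v k + t *: ei R k - y| <= `|v|.
Proof.
move=> tv; apply: row_norm_le => // j; rewrite /coord_path !mxE eqxx /=.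
rewrite [X in `|X|](_ : _ = (if (j < k)%N then v 0 j else 0) + t * (j == k)%:R); last by ring.
case: (eqVneq j k) => [->|jk]; first by rewrite ltnn add0r mulr1 (le_trans tv) ?row_entry_le_norm.
by rewrite mulr0 addr0; case: ifP; rewrite ?row_entry_le_norm ?normr0.
Qed.

(* Telescoping along [coord_path] and the mean value theorem on each segment. *)
Lemma has_grad_partials g y (rho : R) : 0 < rho ->
  (forall z, `|z - y| < rho -> forall k, derivable g z (ei R k)) ->
  (forall k, {for y, continuous (fun z => derive g z (ei R k))}) ->
  has_grad g y (fun k => derive g y (ei R k)).
Proof.
move=> rho0 dg cg e e0.
pose e' := e / (m%:R + 1).
have m1 : 0 < m%:R + 1 :> R by rewrite ltr_wpDl // ler0n.
have e'0 : 0 < e' by rewrite divr_gt0.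
have close k : \forall z \near y, `|derive g y (ei R k) - derive g z (ei R k)| <= e'.
  by move: (cg k) => /cvgrPdist_le /(_ e' e'0).
have [d /= d0 Hd] := (nbhs_ballP _ _).1 (@filter_forall _ _ _ _ _ close).
exists (Num.min d rho); first by rewrite lt_min d0 rho0.
move=> v; rewrite lt_min => /andP[vd vrho].
pose step (i : nat) := g (coord_path y v i.+1) - g (coord_path y v i).
have -> : g (y + v) - g y = \sum_(i < m) step i.
  by rewrite -(big_mkord xpredT step) telescope_sumr // coord_path0 coord_path_end.
rewrite /lin_form -sumrB; apply: le_trans (ler_norm_sum _ _ _) _.
apply: (@le_trans _ _ (\sum_(i < m) e' * `|v|)).
  apply: ler_sum => k _.
  have [t [tv ->]] : exists t, `|t| <= `|v 0 k| /\ step k = v 0 k * derive g (coord_path y v k + t *: ei R k) (ei R k).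
    rewrite /step coord_pathS; apply: MVT_line => t tv; apply: dg.
    exact: le_lt_trans (coord_path_near _ tv) vrho.
  rewrite -mulrBr normrM mulrC; apply: ler_pM => //; last exact: row_entry_le_norm.
  rewrite -normrN opprB; apply: Hd.
  by rewrite -ball_normE /= -normrN opprB (le_lt_trans (coord_path_near _ tv)).
rewrite sumr_const card_ord -mulr_natr mulrC mulrA ler_wpM2r //.
by rewrite /e' mulrA ler_pdivrMr // mulrC ler_pM2l // lerDl.
Qed.

Lemma second_difference_approx g x a b (h e : R) (ca : 'I_m -> R) :
  0 < h -> 0 <= e ->
  (forall t, `|t| <= h -> derivable g (x + t *: ei R a) (ei R a) /\
                         derivable g (x + t *: ei R a + h *: ei R b) (ei R a)) ->
  (forall u, `|u| <= 2 * h ->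
     `|derive g (x + u) (ei R a) - derive g x (ei R a) - lin_form ca u| <= e * `|u|) ->
  `|g (x + h *: ei R a + h *: ei R b) - g (x + h *: ei R a) - g (x + h *: ei R b) + g x
     - h ^+ 2 * ca b| <= 3 * e * h ^+ 2.
Proof.
move=> h0 e0 dg ca_grad; have hge0 := ltW h0.
pose dh := (fun z => g (z + h *: ei R b)) - g.
have [t [th E]] : exists t, `|t| <= `|h| /\
    dh (x + h *: ei R a) - dh x = h * derive dh (x + t *: ei R a) (ei R a).
  apply: MVT_line => t; rewrite (ger0_norm hge0) => th; have [d1 d2] := dg t th.
  by apply: derivableB; [exact: derivable_translate | exact: d1].
rewrite (ger0_norm hge0) in th; have [d1 d2] := dg t th.
rewrite (_ : _ + g x = dh (x + h *: ei R a) - dh x); last by rewrite /dh !fctE; ring.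
rewrite E /dh deriveB; [| exact: derivable_translate | exact: d1].
rewrite derive_translate -addrA.
set u2 := t *: ei R a; set u1 := u2 + h *: ei R b.
have lin_u : lin_form ca u1 = h * ca b + lin_form ca u2.
  by rewrite /u1 linearD /= lin_form_scale_ei addrC.
have nu1 : `|u1| <= 2 * h.
  apply: le_trans (ler_normD _ _) _; rewrite !normrZ !norm_ei !mulr1 (ger0_norm hge0).
  by rewrite mulr2n mulrDl mul1r lerD2r.
have nu2 : `|u2| <= h by rewrite /u2 normrZ norm_ei mulr1.
have B1 := ca_grad u1 nu1.
have B2 := ca_grad u2 (le_trans nu2 (ler_peMl hge0 (ler1n R 2))).
set D1 := derive g (x + u1) (ei R a) - _ - _ in B1.
set D2 := derive g (x + u2) (ei R a) - _ - _ in B2.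
rewrite (_ : h * _ - _ = h * (D1 - D2)); last by rewrite /D1 /D2 lin_u; ring.
rewrite normrM (ger0_norm hge0).
apply: le_trans (ler_wpM2l hge0 (ler_normB _ _)) _.
apply: le_trans (ler_wpM2l hge0 (lerD B1 B2)) _.
have : e * `|u1| + e * `|u2| <= e * (2 * h) + e * h by apply: lerD; apply: ler_wpM2l.
by move=> /(ler_wpM2l hge0) /le_trans; apply; rewrite le_eqVlt; apply/orP; left; apply/eqP; ring.
Qed.

Lemma has_grad_partials_sym g x a b (rho : R) (ca cb : 'I_m -> R) : 0 < rho ->
  (forall z, `|z - x| < rho -> derivable g z (ei R a) /\ derivable g z (ei R b)) ->
  has_grad (fun z => derive g z (ei R a)) x ca ->
  has_grad (fun z => derive g z (ei R b)) x cb ->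
  ca b = cb a.
Proof.
move=> rho0 dg ga gb.
suff close e : 0 < e -> `|ca b - cb a| <= 6 * e.
  have [d0|] := ltrP 0 `|ca b - cb a|; last by move=> ?; apply/eqP; rewrite -subr_eq0 -normr_le0.
  have d12 : 0 < `|ca b - cb a| / 12 by rewrite divr_gt0.
  by have := close _ d12; lra.
move=> e0; have [da da0 Ha] := ga e e0; have [db db0 Hb] := gb e e0.
pose M := Num.min (Num.min da db) rho; pose h := M / 4.
have M0 : 0 < M by rewrite !lt_min da0 db0 rho0.
have h0 : 0 < h by rewrite divr_gt0.
have : 2 * h < M by rewrite /h; lra.
rewrite !lt_min => /andP[/andP[h2a h2b] h2r]; clearbody h; have hge0 := ltW h0.
have step (p q : 'I_m) t : `|t| <= h -> `|t *: ei R p + h *: ei R q| <= 2 * h.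
  move=> th; apply: le_trans (ler_normD _ _) _.
  by rewrite !normrZ !norm_ei !mulr1 (ger0_norm hge0) mulr2n mulrDl mul1r lerD2r.
have step1 (p : 'I_m) t : `|t| <= h -> `|t *: ei R p| <= 2 * h.
  by move=> th; rewrite normrZ norm_ei mulr1 (le_trans th) // ler_peMl // ler1n.
have dgx z : `|z| <= 2 * h -> derivable g (x + z) (ei R a) /\ derivable g (x + z) (ei R b).
  by move=> zh; apply: dg; rewrite addrC addKr (le_lt_trans zh).
have Sa := @second_difference_approx g x a b h e ca h0 (ltW e0).
have Sb := @second_difference_approx g x b a h e cb h0 (ltW e0).
have {}Sa := Sa (fun t th => conj (dgx _ (step1 a t th)).1
    (eq_ind _ (fun z => derivable g z (ei R a)) (dgx _ (step a b t th)).1 _ (addrA _ _ _)))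
    (fun u hu => Ha u (le_lt_trans hu h2a)).
have {}Sb := Sb (fun t th => conj (dgx _ (step1 b t th)).2
    (eq_ind _ (fun z => derivable g z (ei R b)) (dgx _ (step b a t th)).2 _ (addrA _ _ _)))
    (fun u hu => Hb u (le_lt_trans hu h2b)).
rewrite [x + h *: ei R b + h *: ei R a]addrAC in Sb.
set D := g (x + h *: ei R a + h *: ei R b) in Sa Sb.
set A := g (x + h *: ei R a) in Sa Sb.
set B := g (x + h *: ei R b) in Sa Sb.
have hh : 0 < h ^+ 2 by rewrite exprn_gt0.
rewrite -(ler_pM2l hh) -[X in X * _](ger0_norm (ltW hh)) -normrM mulrBr.
rewrite (_ : _ - _ = (D - B - A + g x - h ^+ 2 * cb a) - (D - A - B + g x - h ^+ 2 * ca b));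
  last by ring.
apply: le_trans (ler_normB _ _) _; apply: le_trans (lerD Sb Sa) _.
by rewrite le_eqVlt; apply/orP; left; apply/eqP; ring.
Qed.

Lemma derive_row_coord p (f : 'rV[R]_m -> 'rV[R]_p) x v (b : 'I_p) :
  differentiable f x -> derive (fun w => f w 0 b) x v = 'd f x v 0 b.
Proof. by move=> df; rewrite -deriveE // derive_mx ?mxE //; exact: diff_derivable. Qed.

Lemma derivable_row_coord p (f : 'rV[R]_m -> 'rV[R]_p) x v (b : 'I_p) :
  differentiable f x -> derivable (fun w => f w 0 b) x v.
Proof. by move=> df; apply: (derivable_mxP f x v).1; exact: diff_derivable. Qed.

Lemma derive_comp_coord (f : 'rV[R]_m -> 'rV[R]_m) g x v :
  differentiable f x -> differentiable g (f x) ->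
  derive (g \o f) x v = \sum_b derive (fun w => f w 0 b) x v * derive g (f x) (ei R b).
Proof.
move=> df dg; rewrite deriveE; last exact: differentiable_comp.
rewrite diff_comp // /= diff_lin_form //; apply: eq_bigr => b _.
by rewrite derive_row_coord.
Qed.

Section Leibniz.
Variables (p : nat) (G H : 'I_p -> 'rV[R]_m -> R) (x v : 'rV[R]_m).
Hypotheses (dG : forall a, derivable (G a) x v) (dH : forall a, derivable (H a) x v).

Let sum_mulE : (fun w => \sum_a G a w * H a w) = \sum_a (G a * H a).
Proof. by apply: funext => w; rewrite fct_sumE. Qed.

Lemma derivable_sum_mul : derivable (fun w => \sum_a G a w * H a w) x v.
Proof. by rewrite sum_mulE; apply: derivable_sum => a; exact: derivableM. Qed.

Lemma derive_sum_mul : derive (fun w => \sum_a G a w * H a w) x v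
  = \sum_a (G a x * derive (H a) x v + H a x * derive (G a) x v).
Proof.
rewrite sum_mulE derive_sum => [|a]; last exact: derivableM.
by apply: eq_bigr => a _; rewrite deriveM.
Qed.

End Leibniz.

End RowAnalysis.

Section BlockPartials.
Variables (R : realType) (n1 n2 : nat) (P : 'rV[R]_(n1 + n2) -> R).

Lemma ei_rshift (k : 'I_n2) : ei R (rshift n1 k) = row_mx 0 (ei R k).
Proof.
apply/rowP => j; rewrite !mxE; case: splitP => j' Ej; rewrite !mxE /=.
  have -> // : (j == rshift n1 k) = false.
  by apply/eqP => /(congr1 val) /=; rewrite Ej => E; move: (ltn_ord j'); rewrite E ltnNge leq_addr.
by rewrite (_ : j = rshift n1 j') ?eq_rshift //; apply: val_inj.
Qed.

Lemma ei_lshift (k : 'I_n1) : ei R (lshift n2 k) = row_mx (ei R k) 0.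
Proof.
apply/rowP => j; rewrite !mxE; case: splitP => j' Ej; rewrite !mxE /=.
  by rewrite (_ : j = lshift n2 j') ?eq_lshift 1?eq_sym //; apply: val_inj.
have -> // : (j == lshift n2 k) = false.
by apply/eqP => /(congr1 val) /=; rewrite Ej => E; move: (ltn_ord k); rewrite -E ltnNge leq_addr.
Qed.

Let right_quotient (x : 'rV[R]_n1) (y : 'rV[R]_n2) (k : 'I_n2) :
  (fun h : R => h^-1 *: (((fun y => P (row_mx x y)) \o shift y) (h *: ei R k) - P (row_mx x y)))
  = (fun h : R => h^-1 *: ((P \o shift (row_mx x y)) (h *: ei R (rshift n1 k)) - P (row_mx x y))).
Proof.
apply: funext => h /=; congr (_ *: (P _ - _)).
by rewrite ei_rshift scale_row_mx add_row_mx scaler0 add0r.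
Qed.

Let left_quotient (x : 'rV[R]_n1) (y : 'rV[R]_n2) (k : 'I_n1) :
  (fun h : R => h^-1 *: (((fun x => P (row_mx x y)) \o shift x) (h *: ei R k) - P (row_mx x y)))
  = (fun h : R => h^-1 *: ((P \o shift (row_mx x y)) (h *: ei R (lshift n2 k)) - P (row_mx x y))).
Proof.
apply: funext => h /=; congr (_ *: (P _ - _)).
by rewrite ei_lshift scale_row_mx add_row_mx scaler0 add0r.
Qed.

Lemma derive_row_mxr x y k :
  derive (fun y => P (row_mx x y)) y (ei R k) = derive P (row_mx x y) (ei R (rshift n1 k)).
Proof. by rewrite /derive right_quotient. Qed.

Lemma derivable_row_mxr x y k : derivable P (row_mx x y) (ei R (rshift n1 k)) ->
  derivable (fun y => P (row_mx x y)) y (ei R k).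
Proof. by rewrite /derivable right_quotient. Qed.

Lemma derive_row_mxl x y k :
  derive (fun x => P (row_mx x y)) x (ei R k) = derive P (row_mx x y) (ei R (lshift n2 k)).
Proof. by rewrite /derive left_quotient. Qed.

Lemma derivable_row_mxl x y k : derivable P (row_mx x y) (ei R (lshift n2 k)) ->
  derivable (fun x => P (row_mx x y)) x (ei R k).
Proof. by rewrite /derivable left_quotient. Qed.

Lemma continuous_row_mxr (x : 'rV[R]_n1) : continuous (fun y : 'rV[R]_n2 => row_mx x y).
Proof.
move=> u A /nbhs_ballP[e /= e0 eA]; apply/nbhs_ballP; exists e => //= v [_ uv].
by apply: eA; split => // i j; rewrite !mxE; case: splitP => j' _; [exact: ballxx | exact: uv].
Qed.

Lemma continuous_row_mxl (y : 'rV[R]_n2) : continuous (fun x : 'rV[R]_n1 => row_mx x y).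
Proof.
move=> u A /nbhs_ballP[e /= e0 eA]; apply/nbhs_ballP; exists e => //= v [_ uv].
by apply: eA; split => // i j; rewrite !mxE; case: splitP => j' _; [exact: uv | exact: ballxx].
Qed.

End BlockPartials.

Section IteratedBlockPartials.
Variables (R : realType) (n1 n2 : nat) (P : 'rV[R]_(n1 + n2) -> R).

Lemma iter_pd_row_mxr x l :
  iter_pd l (fun y => P (row_mx x y)) = fun y => iter_pd [seq rshift n1 k | k <- l] P (row_mx x y).
Proof. by elim: l => [|k l IH] //=; rewrite IH; apply: funext => y; rewrite /pd derive_row_mxr. Qed.

Lemma iter_pd_row_mxl y l :
  iter_pd l (fun x => P (row_mx x y)) = fun x => iter_pd [seq lshift n2 k | k <- l] P (row_mx x y).
Proof. by elim: l => [|k l IH] //=; rewrite IH; apply: funext => x; rewrite /pd derive_row_mxl. Qed.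

End IteratedBlockPartials.

Section AlgebraicBianchi.
Variables (T : comPzRingType) (n : nat).
Variables (G : 'I_n -> 'I_n -> 'I_n -> T) (dG : 'I_n -> 'I_n -> 'I_n -> 'I_n -> T).
Implicit Types (i j k r : 'I_n).

(* [G i k j] stands for \Gamma^i_{kj} and [dG r i k j] for its derivative
   \partial_r \Gamma^i_{kj}: then [curv i r j k] is
   \widehat{\mathfrak R}^i_{rj,k} and [covd_tor r i k j] is \widehat d_r T^i_{kj}. *)
Definition curv i r j k : T :=
  dG r i k j + \sum_a G i a j * G a k r - dG j i k r - \sum_a G i a r * G a k j.

Definition covd_tor r i k j : T :=
  dG r i k j - dG r i j k - \sum_a G i a r * (G a k j - G a j k).

Lemma covd_tor_cyclic i r k j :
  covd_tor r i k j - covd_tor k i r j - covd_tor j i k r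
  = curv i r j k + curv i k r j + curv i j k r.
Proof. by rewrite /covd_tor /curv !sumr_mulBr; ring. Qed.

End AlgebraicBianchi.

Section Bianchi.
Variables (R : realType) (n : nat) (eps : 'rV[R]_n -> 'rV[R]_n -> 'M[R]_n) (x : 'rV[R]_n).

Definition Rhat : 'I_n -> 'I_n -> 'I_n -> 'I_n -> R :=
  curv (fun i k j => Gam eps i k j x) (fun r i k j => pd r (Gam eps i k j) x).

Hypothesis dGam : forall i k j r, derivable (Gam eps i k j) x (ei R r).

Lemma pd_Tor i k j r : pd r (Tor eps i k j) x = pd r (Gam eps i k j) x - pd r (Gam eps i j k) x.
Proof. by rewrite /pd -deriveB //; congr derive; apply: funext. Qed.

Lemma dhat_Tor i r k j :
  dhat eps (Tor eps) i r k j x = Rhat i r j k + Rhat i k r j + Rhat i j k r.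
Proof. by rewrite /dhat /dhat_r !pd_Tor; exact: covd_tor_cyclic. Qed.

End Bianchi.

Section Splitting.
Variables (R : realType) (n : nat) (U : set 'rV[R]_n) (eps : 'rV[R]_n -> 'rV[R]_n -> 'M[R]_n).
Hypotheses (oU : open U) (sp : splitting U eps).
Implicit Types (x y z w : 'rV[R]_n) (i j k r s a b : 'I_n).

Let eps_entry i j : 'rV[R]_(n + n) -> R := fun p => eps (lsubmx p) (rsubmx p) i j.

Let U2_row_mx x y : U x -> U y ->
  [set p : 'rV[R]_(n + n) | U (lsubmx p) /\ U (rsubmx p)] (row_mx x y).
Proof. by move=> Ux Uy; rewrite /= row_mxKl row_mxKr. Qed.

Lemma eps_smooth_r l x y i j : U x -> U y ->
  {for y, continuous (iter_pd l (fun w => eps x w i j))} /\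
  forall k, derivable (iter_pd l (fun w => eps x w i j)) y (ei R k).
Proof.
move=> Ux Uy; have [sm _ _ _] := sp.
have -> : (fun w => eps x w i j) = fun w => eps_entry i j (row_mx x w).
  by apply: funext => w; rewrite /eps_entry row_mxKl row_mxKr.
rewrite iter_pd_row_mxr; have [c d] := sm i j [seq rshift n k | k <- l] (row_mx x y) (@U2_row_mx x y Ux Uy).
split; first by have := @continuous_comp _ _ _ (fun w => row_mx x w) _ y (@continuous_row_mxr R n n x y) c.
by move=> k; apply: derivable_row_mxr; exact: d.
Qed.

Lemma eps_smooth_l l x y i j : U x -> U y ->
  {for y, continuous (iter_pd l (fun w => eps w x i j))} /\
  forall k, derivable (iter_pd l (fun w => eps w x i j)) y (ei R k).
Proof.
move=> Ux Uy; have [sm _ _ _] := sp.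
have -> : (fun w => eps w x i j) = fun w => eps_entry i j (row_mx w x).
  by apply: funext => w; rewrite /eps_entry row_mxKl row_mxKr.
rewrite iter_pd_row_mxl; have [c d] := sm i j [seq lshift n k | k <- l] (row_mx y x) (@U2_row_mx y x Uy Ux).
split; first by have := @continuous_comp _ _ _ (fun w => row_mx w x) _ y (@continuous_row_mxl R n n x y) c.
by move=> k; apply: derivable_row_mxl; exact: d.
Qed.

Lemma eps_cocycle x y w i j : U x -> U y -> U w ->
  eps y w i j = \sum_a eps x w i a * eps y x a j.
Proof. by have [_ _ co _] := sp => Ux Uy Uw; rewrite -(co y x w Uy Ux Uw) mxE. Qed.

Lemma eps_diag x i j : U x -> eps x x i j = (i == j)%:R.
Proof. by have [_ _ _ id] := sp => Ux; rewrite id // mxE. Qed.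

Lemma eps_inv x y i j : U x -> U y -> \sum_a eps y x i a * eps x y a j = (i == j)%:R.
Proof. by move=> Ux Uy; rewrite -(eps_cocycle _ _ Uy) ?eps_diag. Qed.

Lemma differentiable_eps_r x y i j : U x -> U y -> differentiable (fun w => eps x w i j) y.
Proof.
move=> Ux Uy; have [rho rho0 Hr] := open_norm_ball oU Uy.
apply/has_grad_differentiable/(has_grad_partials rho0) => [z zy k|k].
  exact: (eps_smooth_r [::] i j Ux (Hr z zy)).2.
exact: (eps_smooth_r [:: k] i j Ux Uy).1.
Qed.

Lemma differentiable_eps_l x y i j : U x -> U y -> differentiable (fun w => eps w x i j) y.
Proof.
move=> Ux Uy; have [rho rho0 Hr] := open_norm_ball oU Uy.
apply/has_grad_differentiable/(has_grad_partials rho0) => [z zy k|k].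
  exact: (eps_smooth_l [::] i j Ux (Hr z zy)).2.
exact: (eps_smooth_l [:: k] i j Ux Uy).1.
Qed.

Lemma derive_eps_l_diag x i j r : U x ->
  pd r (fun w => eps w x i j) x = - pd r (fun w => eps x w i j) x.
Proof.
move=> Ux; have inv_near : \forall y \near x,
    (fun y => \sum_a eps y x i a * eps x y a j) y = cst (i == j)%:R y.
  by apply: filterS (near_open oU Ux) => y Uy; rewrite /= eps_inv.
have := near_eq_derive (ei R r) inv_near; rewrite derive_cst derive_sum_mul => [|a|a].
- under eq_bigr => a _ do rewrite eps_diag // eps_diag //.
  by rewrite big_split /= sum_delta_l sum_delta_r => /eqP; rewrite addrC addr_eq0 => /eqP.
- exact: (eps_smooth_l [::] i a Ux Ux).2.
- exact: (eps_smooth_r [::] a j Ux Ux).2.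
Qed.

Lemma Gam_cocycle x y i k j : U x -> U y ->
  Gam eps i k j y = \sum_a pd k (fun w => eps x w i a) y * eps y x a j.
Proof.
move=> Ux Uy; have cocycle_near : \forall w \near y,
    (fun w => eps y w i j) w = (fun w => \sum_a eps x w i a * eps y x a j) w.
  by apply: filterS (near_open oU Uy) => w Uw; rewrite /= (eps_cocycle _ _ Ux).
rewrite /Gam /pd (near_eq_derive (ei R k) cocycle_near) derive_sum_mul => [|a|a].
- by apply: eq_bigr => a _; rewrite derive_cst mulr0 add0r mulrC.
- exact: (eps_smooth_r [::] i a Ux Uy).2.
- exact: derivable_cst.
Qed.

Section GamDerivative.
Variables (x : 'rV[R]_n) (i k j r : 'I_n).
Hypothesis Ux : U x.

Let Gam_near : \forall y \near x,
  (fun y => \sum_a pd k (fun w => eps x w i a) y * eps y x a j) y = Gam eps i k j y.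
Proof. by apply: filterS (near_open oU Ux) => y Uy; rewrite /= (Gam_cocycle _ _ _ Ux). Qed.

Let derivable_pd_eps a : derivable (pd k (fun w => eps x w i a)) x (ei R r).
Proof. exact: (eps_smooth_r [:: k] i a Ux Ux).2. Qed.

Let derivable_eps_l a : derivable (fun y => eps y x a j) x (ei R r).
Proof. exact: (eps_smooth_l [::] a j Ux Ux).2. Qed.

Lemma Gam_derivable : derivable (Gam eps i k j) x (ei R r).
Proof. by apply: (near_eq_derivable Gam_near); exact: derivable_sum_mul. Qed.

Lemma derive_Gam : pd r (Gam eps i k j) x
  = pd r (pd k (fun w => eps x w i j)) x - \sum_a Gam eps i k a x * Gam eps a r j x.
Proof.
rewrite /pd -(near_eq_derive (ei R r) Gam_near) derive_sum_mul // big_split /=.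
under eq_bigr => a _ do rewrite -/(pd r _ x) derive_eps_l_diag //.
under [X in _ + X]eq_bigr => a _ do rewrite eps_diag //.
rewrite sum_delta_r addrC -sumrN; congr (_ + _).
by apply: eq_bigr => a _; rewrite mulrN.
Qed.

End GamDerivative.

Lemma has_grad_pd_eps x i j r : U x ->
  has_grad (pd r (fun w => eps x w i j)) x (fun s => pd s (pd r (fun w => eps x w i j)) x).
Proof.
move=> Ux; have [rho rho0 Hr] := open_norm_ball oU Ux.
apply: (has_grad_partials rho0) => [z zx s|s].
  exact: (eps_smooth_r [:: r] i j Ux (Hr z zx)).2.
exact: (eps_smooth_r [:: s; r] i j Ux Ux).1.
Qed.

Lemma eps_schwarz x i j r s : U x ->
  pd s (pd r (fun w => eps x w i j)) x = pd r (pd s (fun w => eps x w i j)) x.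
Proof.
move=> Ux; have [rho rho0 Hr] := open_norm_ball oU Ux.
apply: (has_grad_partials_sym rho0 _ (has_grad_pd_eps i j r Ux) (has_grad_pd_eps i j s Ux)).
by move=> z zx; split; exact: (eps_smooth_r [::] i j Ux (Hr z zx)).2.
Qed.

Section LocalLieGroup.
Hypothesis lie : local_lie_group U eps.

(* For a local solution [f] of [df_w = eps(w, f w)] with [f x = z] this is the
   second derivative [d_r d_j f^i (x)], hence it is symmetric in [r] and [j]. *)
Definition lie_hessian x i r j z : R :=
  \sum_b eps x z b r * pd b (fun w => eps x w i j) z - \sum_a eps x z i a * Gam eps a r j x.

Lemma derive_lie_hessian x i r j s : U x ->
  pd s (lie_hessian x i r j) x = pd s (pd r (fun w => eps x w i j)) x
    + \sum_b Gam eps i b j x * Gam eps b s r x - \sum_a Gam eps i s a x * Gam eps a r j x.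
Proof.
move=> Ux.
have dE a b : derivable (fun z => eps x z a b) x (ei R s).
  exact: (eps_smooth_r [::] a b Ux Ux).2.
have dpdE b : derivable (pd b (fun w => eps x w i j)) x (ei R s).
  exact: (eps_smooth_r [:: b] i j Ux Ux).2.
pose f1 z := \sum_b eps x z b r * pd b (fun w => eps x w i j) z.
pose f2 z := \sum_a eps x z i a * cst (Gam eps a r j x) z.
have dC a : derivable (cst (Gam eps a r j x)) x (ei R s) by exact: derivable_cst.
have d1 := @derivable_sum_mul R n n (fun b z => eps x z b r)
  (fun b => pd b (fun w => eps x w i j)) x (ei R s) (fun b => dE b r) dpdE.
have d2 := @derivable_sum_mul R n n (fun a z => eps x z i a)
  (fun a => cst (Gam eps a r j x)) x (ei R s) (fun a => dE i a) dC.
have -> : lie_hessian x i r j = f1 - f2 by apply: funext.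
rewrite /pd (deriveB d1 d2) /f1 /f2.
rewrite (@derive_sum_mul R n n (fun b z => eps x z b r)
  (fun b => pd b (fun w => eps x w i j)) x (ei R s) (fun b => dE b r) dpdE).
rewrite (@derive_sum_mul R n n (fun a z => eps x z i a)
  (fun a => cst (Gam eps a r j x)) x (ei R s) (fun a => dE i a) dC).
rewrite big_split /=; under eq_bigr => b _ do rewrite eps_diag //.
rewrite sum_delta_r; congr (_ + _ - _).
by apply: eq_bigr => a _; rewrite derive_cst mulr0 add0r mulrC.
Qed.

Section LocalSolution.
Variables (x z : 'rV[R]_n) (V : set 'rV[R]_n) (f : 'rV[R]_n -> 'rV[R]_n).
Hypotheses (Ux : U x) (Uz : U z) (oV : open V) (Vx : V x) (VU : V `<=` U) (fx : f x = z).
Hypotheses (Uf : forall w, V w -> U (f w) /\ differentiable f w)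
  (df : forall w, V w -> forall i j, pd j (fun w => f w 0 i) w = eps w (f w) i j).

(* Near [x] the cocycle writes [d_k f^i (w) = eps^i_k(w, f w)] as a sum of
   products of functions differentiable at [x]. *)
Lemma has_grad_pd_solution i k :
  has_grad (pd k (fun w => f w 0 i)) x (fun s => lie_hessian x i s k z).
Proof.
pose h w := \sum_a eps x (f w) i a * eps w x a k.
have dEf a : differentiable (fun y => eps x y i a) (f x).
  by rewrite fx; exact: differentiable_eps_r Ux Uz.
have h_near : \forall w \near x, h w = pd k (fun w => f w 0 i) w.
  apply: filterS (near_open oV Vx) => w Vw.
  by rewrite /h df // (eps_cocycle _ _ Ux (VU Vw) (Uf Vw).1).
have h_diff : differentiable h x.
  rewrite (_ : h = \sum_a (((fun y => eps x y i a) \o f) * (fun w => eps w x a k))).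
    apply: differentiable_sum => a; apply: differentiableM; last exact: differentiable_eps_l.
    by apply: differentiable_comp => //; exact: (Uf Vx).2.
  by apply: funext => w; rewrite /h fct_sumE.
suff <- : (fun s => derive h x (ei R s)) = (fun s => lie_hessian x i s k z).
  exact: has_grad_near_eq h_near (differentiable_has_grad h_diff).
apply: funext => s; rewrite /h derive_sum_mul => [|a|a]; first last.
- exact: (eps_smooth_l [::] a k Ux Ux).2.
- by apply: diff_derivable; apply: differentiable_comp (dEf a); exact: (Uf Vx).2.
rewrite big_split /= addrC /lie_hessian.
under eq_bigr => a _ do rewrite eps_diag //.
rewrite sum_delta_r; congr (_ + _).
  rewrite -[(fun w => eps x (f w) i k)]/((fun y => eps x y i k) \o f).
  rewrite derive_comp_coord //; last exact: (Uf Vx).2.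
  by apply: eq_bigr => b _; rewrite -/(pd s (fun w => f w 0 b) x) df // fx.
rewrite -sumrN; apply: eq_bigr => a _.
by rewrite -/(pd s (fun w => eps w x a k) x) derive_eps_l_diag // fx mulrN.
Qed.

End LocalSolution.

Lemma lie_hessian_sym x z i r j : U x -> U z -> lie_hessian x i r j z = lie_hessian x i j r z.
Proof.
move=> Ux Uz; have [V [f [[oV Vx VU fx] [_ _ Uf df]]]] := lie Ux Uz.
have [rho rho0 Hr] := open_norm_ball oV Vx.
apply: (@has_grad_partials_sym R n (fun w => f w 0 i) x j r rho
  (fun s => lie_hessian x i s j z) (fun s => lie_hessian x i s r z) rho0).
- by move=> w wx; split; apply: derivable_row_coord; exact: (Uf w (Hr w wx)).2.
- exact: has_grad_pd_solution Ux Uz oV Vx VU fx Uf df i j.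
- exact: has_grad_pd_solution Ux Uz oV Vx VU fx Uf df i r.
Qed.

Lemma Rhat_eq0 x i r j k : U x -> Rhat eps x i r j k = 0.
Proof.
move=> Ux.
have sym : pd k (lie_hessian x i r j) x = pd k (lie_hessian x i j r) x.
  apply: near_eq_derive; apply: filterS (near_open oU Ux) => z Uz.
  exact: lie_hessian_sym.
rewrite !derive_lie_hessian // (eps_schwarz i j r k Ux) (eps_schwarz i r j k Ux) in sym.
rewrite /Rhat /curv !derive_Gam // -addrA -opprD; apply/eqP.
by rewrite subr_eq0 !(addrAC _ (- _)) sym.
Qed.

End LocalLieGroup.

End Splitting.

Theorem proposition10 (R : realType) (n : nat) (U : set 'rV[R]_n)
  (eps : 'rV[R]_n -> 'rV[R]_n -> 'M[R]_n) :
  (2 <= n)%N -> open U -> splitting U eps -> local_lie_group U eps ->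
  forall (x : 'rV[R]_n), U x ->
  forall i r k j : 'I_n, dhat eps (Tor eps) i r k j x = 0.
Proof.
move=> _ oU sp lie x Ux i r k j.
have dGam i' k' j' r' : derivable (Gam eps i' k' j') x (ei R r').
  exact: (@Gam_derivable R n U eps oU sp x i' k' j' r' Ux).
by rewrite (dhat_Tor dGam) !(Rhat_eq0 oU sp lie) // !addr0.
Qed.
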